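(* Let $h>0$, $\alpha>2$, $\beta\ge0$, $c>0$, and let $V$ be as in the setting. Let $\mathcal{N}=(\mathcal{N}_{jk})_{j,k\in\mathbb{Z}}$ be a unitary operator on $l^2(\mathbb{Z})$ such that for all $j,k\in\mathbb{Z}$ $$\Big|\mathcal{N}_{jk}-\delta_{jk}e^{\frac{2\pi}{ih}k^2}-\delta_{-j,k}\frac{e^{\frac{2\pi}{ih}k^2}}{ih}\int_0^{2\pi}v_{-2k}(\tau)\,d\tau\Big|\le\frac{c\,e^{-\beta|j-k|}}{\langle j\rangle\langle k\rangle\langle j-k\rangle^{\alpha-1}}.$$ For $N\in\mathbb{N}$ let $w_{jk}=\mathcal{N}_{jk}$ for $-N\le j,k\le N$, and $\varepsilon_{jk}=\frac{c^2c_{\alpha-1}e^{-\beta|j-k|}}{\langle j\rangle\langle k\rangle(N+1)^2\langle j-k\rangle^{\alpha-1}}$, $\sigma_k=4\sum_{|l|\le|k|}\varepsilon_{lk}$. Then for every sufficiently large $N$ there exists a unitary $(2N+1)\times(2N+1)$ matrix $U=(u_{jk})_{-N\le j,k\le N}$ such that for all $-N\le j,k\le N$ $$|u_{jk}-w_{jk}|\le\sigma_k|w_{jk}|+\sum_{-|k|\le l<|k|,\ l\ne k}4\varepsilon_{lk}|w_{jl}|.$$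
   Context: $V(x,t)=\sum_{k\in\mathbb{Z}}v_k(t)e^{ikx}$ is real-valued and $2\pi$-periodic in $t$ with $v_0\equiv0$; $\langle k\rangle=|k|+1$; $\delta$ is the Kronecker delta; $e^{\frac{t}{ih}k^2}=e^{-itk^2/h}$. For $\nu>1$, $c_\nu$ denotes a constant depending only on $\nu$ such that for all $\beta\ge0$ and $s,m\in\mathbb{Z}$: $\sum_{k\in\mathbb{Z}}\frac{e^{-\beta|s-k|-\beta|k-m|}}{\langle s-k\rangle^\nu\langle k-m\rangle^\nu}\le\frac{c_\nu e^{-\beta|s-m|}}{\langle s-m\rangle^\nu}$. *)

From Stdlib Require Import Reals ZArith List Lra Lia.
From Coquelicot Require Import Coquelicot.
Open Scope R_scope.

Definition jbr (k : Z) : R := IZR (Z.abs k) + 1.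

Definition kdelta (j k : Z) : R := if Z.eq_dec j k then 1 else 0.

Definition cexpi (theta : R) : C := (cos theta, sin theta).

(* Sum over Z of a real family: the absolutely-indexed series
   a 0 + sum_{n>=1} (a n + a (-n)) converges to s. *)
Definition ZsumR (a : Z -> R) (s : R) : Prop :=
  is_series (fun n : nat => if Nat.eqb n 0 then a 0%Z
                            else a (Z.of_nat n) + a (- Z.of_nat n)%Z) s.

Definition ZsumC (a : Z -> C) (s : C) : Prop :=
  ZsumR (fun k => Re (a k)) (Re s) /\ ZsumR (fun k => Im (a k)) (Im s).

(* Unitarity of a Z x Z matrix (matrix entries M j k = <e_j, M e_k>):
   N^* N = I and N N^* = I written out entrywise. *)
Definition unitary_Z (M : Z -> Z -> C) : Prop :=
  (forall k l : Z, ZsumC (fun j => Cmult (Cconj (M j k)) (M j l)) (RtoC (kdelta k l))) /\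
  (forall j l : Z, ZsumC (fun k => Cmult (M j k) (Cconj (M l k))) (RtoC (kdelta j l))).

(* Finite sums over the integer interval [a, b] (empty if b < a). *)
Definition Zinterval (a b : Z) : list Z :=
  map (fun i : nat => (a + Z.of_nat i)%Z) (seq 0 (Z.to_nat (b - a + 1))).

Definition sumR (a b : Z) (f : Z -> R) : R :=
  fold_right Rplus 0 (map f (Zinterval a b)).

Definition sumC (a b : Z) (f : Z -> C) : C :=
  fold_right Cplus (RtoC 0) (map f (Zinterval a b)).

Definition unitary_fin (N : Z) (U : Z -> Z -> C) : Prop :=
  (forall k l : Z, (- N <= k <= N)%Z -> (- N <= l <= N)%Z ->
     sumC (- N) N (fun j => Cmult (Cconj (U j k)) (U j l)) = RtoC (kdelta k l)) /\
  (forall j l : Z, (- N <= j <= N)%Z -> (- N <= l <= N)%Z ->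
     sumC (- N) N (fun k => Cmult (U j k) (Cconj (U l k))) = RtoC (kdelta j l)).

Definition is_c_nu (nu cnu : R) : Prop :=
  forall (beta : R), 0 <= beta -> forall s m : Z,
    exists S : R,
      ZsumR (fun k => exp (- beta * IZR (Z.abs (s - k)) - beta * IZR (Z.abs (k - m)))
                      / (Rpower (jbr (s - k)) nu * Rpower (jbr (k - m)) nu)) S /\
      S <= cnu * exp (- beta * IZR (Z.abs (s - m))) / Rpower (jbr (s - m)) nu.

(* Standing assumptions on the Fourier coefficients v_k(t) of
   V(x,t) = sum_k v_k(t) e^{ikx}: V real-valued (v_{-k} = conj v_k),
   2pi-periodic in t, v_0 = 0, and each v_k integrable on [0, 2pi]. *)
Definition potential_coeffs (v : Z -> R -> C) : Prop :=
  (forall t, v 0%Z t = RtoC 0) /\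
  (forall k t, v k (t + 2 * PI) = v k t) /\
  (forall k t, v (- k)%Z t = Cconj (v k t)) /\
  (forall k, ex_RInt (fun t => Re (v k t)) 0 (2 * PI) /\
             ex_RInt (fun t => Im (v k t)) 0 (2 * PI)).

Definition int_v (v : Z -> R -> C) (k : Z) : C :=
  (RInt (fun t => Re (v k t)) 0 (2 * PI), RInt (fun t => Im (v k t)) 0 (2 * PI)).

(* e^{(2 pi / (i h)) k^2} = e^{- i 2 pi k^2 / h} *)
Definition phase (h : R) (k : Z) : C := cexpi (- (2 * PI * IZR (k * k)) / h).

Definition Nmodel (h : R) (v : Z -> R -> C) (j k : Z) : C :=
  Cplus (Cmult (RtoC (kdelta j k)) (phase h k))
        (Cmult (RtoC (kdelta (- j) k))
               (Cmult (Cdiv (phase h k) (Cmult Ci (RtoC h))) (int_v v (- 2 * k)%Z))).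

Definition eps_jk (c cnu alpha beta : R) (N : nat) (j k : Z) : R :=
  c ^ 2 * cnu * exp (- beta * IZR (Z.abs (j - k)))
  / (jbr j * jbr k * (INR N + 1) ^ 2 * Rpower (jbr (j - k)) (alpha - 1)).

Definition sigma_k (c cnu alpha beta : R) (N : nat) (k : Z) : R :=
  4 * sumR (- Z.abs k) (Z.abs k) (fun l => eps_jk c cnu alpha beta N l k).

(* Truncate [NN] to the window [[-N, N]] and orthonormalise its columns by Gram-Schmidt in the
   order 0, -1, 1, -2, 2, ..., so that column [k] only mixes with columns [l], [|l| <= |k|].
   Because [NN] is unitary and the model entries vanish off [j = +-k], the truncated columns
   lose only the rows [|j| > N], where [<j> >= N + 1]; with the c_nu convolution inequality this
   puts their Gram matrix within [2 eps_lk] of the identity.  The matrix [eps] is [O(1/N)] and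
   almost reproduces itself under convolution, so by induction on the Gram-Schmidt steps the
   coefficient matrix stays within [4 eps] of the identity off the diagonal and within [sigma_k]
   on it, which gives the entrywise bound. *)

From Stdlib Require Import Reals ZArith List Lra Lia FunctionalExtensionality.
From Coquelicot Require Import Coquelicot.
Open Scope R_scope.

Fixpoint csum (n : nat) (f : nat -> C) : C :=
  match n with O => RtoC 0 | S n' => Cplus (csum n' f) (f n') end.
Fixpoint rsum (n : nat) (f : nat -> R) : R :=
  match n with O => 0 | S n' => rsum n' f + f n' end.

Definition cdelta (m q : nat) : C := if Nat.eqb m q then RtoC 1 else RtoC 0.

Lemma cdelta_sym p q : cdelta p q = cdelta q p.
Proof. unfold cdelta. destruct (Nat.eqb_spec p q), (Nat.eqb_spec q p); auto; lia. Qed.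

Lemma cdelta_conj p q : Cconj (cdelta p q) = cdelta p q.
Proof. unfold cdelta. destruct (Nat.eqb p q); apply injective_projections; simpl; lra. Qed.

Lemma Cmult_conj_l_self z : Cmult (Cconj z) z = RtoC (Cmod z ^ 2).
Proof. rewrite Cmod2_conj. ring. Qed.

Lemma Cmult_conj_r_self z : Cmult z (Cconj z) = RtoC (Cmod z ^ 2).
Proof. rewrite Cmod2_conj. ring. Qed.

Section FiniteSums.
Implicit Types (n m q : nat) (f g : nat -> C) (r s : nat -> R).

Lemma csum_ext n f g : (forall i, (i < n)%nat -> f i = g i) -> csum n f = csum n g.
Proof. induction n; simpl; intros H; auto. rewrite IHn, H by (auto; lia). auto. Qed.

Lemma csum_zero n f : (forall i, (i < n)%nat -> f i = RtoC 0) -> csum n f = RtoC 0.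
Proof. induction n; simpl; intros H; auto. rewrite IHn, H by (auto; lia). ring. Qed.

Lemma csum_plus n f g : csum n (fun i => Cplus (f i) (g i)) = Cplus (csum n f) (csum n g).
Proof. induction n; simpl. ring. rewrite IHn; ring. Qed.

Lemma csum_minus n f g : csum n (fun i => Cminus (f i) (g i)) = Cminus (csum n f) (csum n g).
Proof. induction n; simpl. ring. rewrite IHn; ring. Qed.

Lemma csum_scal_l n a f : csum n (fun i => Cmult a (f i)) = Cmult a (csum n f).
Proof. induction n; simpl. ring. rewrite IHn; ring. Qed.

Lemma csum_scal_r n a f : csum n (fun i => Cmult (f i) a) = Cmult (csum n f) a.
Proof. induction n; simpl. ring. rewrite IHn; ring. Qed.

Lemma csum_swap n m (f : nat -> nat -> C) :
  csum n (fun i => csum m (f i)) = csum m (fun j => csum n (fun i => f i j)).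
Proof. induction n; simpl. symmetry; apply csum_zero; auto. rewrite IHn, csum_plus. auto. Qed.

Lemma csum_conj n f : Cconj (csum n f) = csum n (fun i => Cconj (f i)).
Proof.
  induction n; simpl. apply injective_projections; simpl; lra.
  rewrite Cplus_conj, IHn; auto.
Qed.

Lemma csum_cdelta_r n q f : (q < n)%nat -> csum n (fun m => Cmult (f m) (cdelta m q)) = f q.
Proof.
  induction n; simpl; intros H. lia.
  unfold cdelta at 2. destruct (Nat.eqb_spec n q).
  - subst. rewrite csum_zero. ring.
    intros i Hi. unfold cdelta. destruct (Nat.eqb_spec i q). lia. ring.
  - rewrite IHn by lia. ring.
Qed.

Lemma csum_cdelta_l n q f : (q < n)%nat -> csum n (fun m => Cmult (cdelta q m) (f m)) = f q.
Proof.
  intros H. rewrite <- (csum_cdelta_r n q f H). apply csum_ext. intros i _.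
  rewrite cdelta_sym. ring.
Qed.

Lemma rsum_ext n r s : (forall i, (i < n)%nat -> r i = s i) -> rsum n r = rsum n s.
Proof. induction n; simpl; intros H; auto. rewrite IHn, H by (auto; lia). auto. Qed.

Lemma rsum_zero n r : (forall i, (i < n)%nat -> r i = 0) -> rsum n r = 0.
Proof. induction n; simpl; intros H; auto. rewrite IHn, H by (auto; lia). lra. Qed.

Lemma rsum_le n r s : (forall i, (i < n)%nat -> r i <= s i) -> rsum n r <= rsum n s.
Proof.
  induction n; simpl; intros H. lra.
  pose proof (H n ltac:(lia)). pose proof (IHn ltac:(intros; apply H; lia)). lra.
Qed.

Lemma rsum_nonneg n r : (forall i, (i < n)%nat -> 0 <= r i) -> 0 <= rsum n r.
Proof.
  intros H. replace 0 with (rsum n (fun _ => 0)) by (apply rsum_zero; auto).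
  apply rsum_le; auto.
Qed.

Lemma rsum_plus n r s : rsum n (fun i => r i + s i) = rsum n r + rsum n s.
Proof. induction n; simpl. lra. rewrite IHn; lra. Qed.

Lemma rsum_scal_l n a r : rsum n (fun i => a * r i) = a * rsum n r.
Proof. induction n; simpl. lra. rewrite IHn; lra. Qed.

Lemma rsum_const n x : rsum n (fun _ => x) = INR n * x.
Proof. induction n; simpl rsum. simpl; lra. rewrite IHn, S_INR. lra. Qed.

Lemma rsum_le_mono n n' r :
  (n <= n')%nat -> (forall i, (i < n')%nat -> 0 <= r i) -> rsum n r <= rsum n' r.
Proof.
  intros Hle; induction Hle; intros H. lra.
  simpl. pose proof (H m ltac:(lia)). pose proof (IHHle ltac:(intros; apply H; lia)). lra.
Qed.

Lemma rsum_if_eq n q r : (q < n)%nat -> rsum n (fun m => if Nat.eqb m q then r m else 0) = r q.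
Proof.
  induction n; intros H. lia. cbn [rsum].
  destruct (Nat.eqb_spec n q).
  - subst. rewrite rsum_zero. lra. intros i Hi. destruct (Nat.eqb_spec i q). lia. lra.
  - rewrite IHn by lia. lra.
Qed.

Lemma rsum_if_lt n p r : (p <= n)%nat -> rsum n (fun m => if Nat.ltb m p then r m else 0) = rsum p r.
Proof.
  intros H. induction H.
  - apply rsum_ext. intros i Hi. destruct (Nat.ltb_spec i p); [auto|lia].
  - cbn [rsum]. rewrite IHle. destruct (Nat.ltb_spec m p); [lia|]. lra.
Qed.

Lemma rsum_eq0_nonneg n r : (forall i, (i < n)%nat -> 0 <= r i) -> rsum n r = 0 ->
  forall i, (i < n)%nat -> r i = 0.
Proof.
  induction n; simpl; intros H Hs i Hi. lia.
  assert (0 <= rsum n r) by (apply rsum_nonneg; intros; apply H; lia).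
  pose proof (H n ltac:(lia)).
  destruct (Nat.eq_dec i n). subst; lra. apply IHn; [intros; apply H; lia|lra|lia].
Qed.

Lemma Re_csum n f : Re (csum n f) = rsum n (fun i => Re (f i)).
Proof. induction n; simpl; auto. rewrite <- IHn. auto. Qed.

Lemma Im_csum n f : Im (csum n f) = rsum n (fun i => Im (f i)).
Proof. induction n; simpl; auto. rewrite <- IHn. auto. Qed.

Lemma RtoC_rsum n r : RtoC (rsum n r) = csum n (fun i => RtoC (r i)).
Proof. induction n; simpl; auto. rewrite <- IHn. apply injective_projections; simpl; lra. Qed.

Lemma Cmod_csum n f : Cmod (csum n f) <= rsum n (fun i => Cmod (f i)).
Proof. induction n; simpl. rewrite Cmod_0; lra. eapply Rle_trans. apply Cmod_triangle. lra. Qed.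

End FiniteSums.

(* Idempotence gives [tr Q = sum |Q i i'|^2], which forces every entry to vanish. *)
Lemma hermitian_idempotent_trace0 n (Q : nat -> nat -> C) :
  (forall i i', Cconj (Q i i') = Q i' i) ->
  (forall i i'', (i < n)%nat -> (i'' < n)%nat ->
     csum n (fun i' => Cmult (Q i i') (Q i' i'')) = Q i i'') ->
  csum n (fun i => Q i i) = RtoC 0 ->
  forall i i', (i < n)%nat -> (i' < n)%nat -> Q i i' = RtoC 0.
Proof.
  intros Hherm Hidem Htr.
  assert (Hsum : rsum n (fun i => rsum n (fun i' => Cmod (Q i i') ^ 2)) = 0).
  { apply (f_equal Re) in Htr. simpl in Htr. rewrite <- Htr, Re_csum.
    apply rsum_ext; intros i Hi. rewrite <- (Hidem i i Hi Hi), Re_csum.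
    apply rsum_ext; intros i' Hi'. rewrite <- (Hherm i i'), Cmult_conj_r_self. auto. }
  intros i i' Hi Hi'. apply Cmod_eq_0.
  assert (Cmod (Q i i') ^ 2 = 0); [|nra].
  apply (rsum_eq0_nonneg n (fun i' => Cmod (Q i i') ^ 2)); auto.
  - intros; apply pow2_ge_0.
  - apply (rsum_eq0_nonneg n (fun i => rsum n (fun i' => Cmod (Q i i') ^ 2))); auto.
    intros. apply rsum_nonneg. intros; apply pow2_ge_0.
Qed.

(* [I - U U^*] is a Hermitian idempotent of trace 0. *)
Lemma unitary_of_isometry n (U : nat -> nat -> C) :
  (forall p q, (p < n)%nat -> (q < n)%nat ->
     csum n (fun j => Cmult (Cconj (U p j)) (U q j)) = cdelta p q) ->
  forall i i', (i < n)%nat -> (i' < n)%nat ->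
    csum n (fun q => Cmult (U q i) (Cconj (U q i'))) = cdelta i i'.
Proof.
  intros H.
  set (P := fun i i' => csum n (fun q => Cmult (U q i) (Cconj (U q i')))).
  assert (HPherm : forall i i', Cconj (P i i') = P i' i).
  { intros. unfold P. rewrite csum_conj. apply csum_ext. intros.
    rewrite Cmult_conj, Cconj_conj. ring. }
  assert (HPidem : forall i i'', (i < n)%nat -> (i'' < n)%nat ->
            csum n (fun i' => Cmult (P i i') (P i' i'')) = P i i'').
  { intros i i'' Hi Hi''. unfold P.
    transitivity (csum n (fun i' => csum n (fun q => csum n (fun q' =>
        Cmult (Cmult (U q i) (Cconj (U q' i''))) (Cmult (Cconj (U q i')) (U q' i')))))).
    { apply csum_ext; intros i' _. rewrite <- csum_scal_r. apply csum_ext; intros q _.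
      rewrite <- csum_scal_l. apply csum_ext; intros q' _. ring. }
    rewrite csum_swap. apply csum_ext; intros q Hq. rewrite csum_swap.
    transitivity (csum n (fun q' => Cmult (cdelta q q') (Cmult (U q i) (Cconj (U q' i''))))).
    { apply csum_ext; intros q' Hq'. rewrite csum_scal_l, H by auto. ring. }
    apply csum_cdelta_l; auto. }
  set (Q := fun i i' => Cminus (cdelta i i') (P i i')).
  assert (HQ : forall i i', (i < n)%nat -> (i' < n)%nat -> Q i i' = RtoC 0).
  { apply hermitian_idempotent_trace0.
    - intros. unfold Q. rewrite Cminus_conj, HPherm, cdelta_conj, cdelta_sym. auto.
    - intros i i'' Hi Hi''. unfold Q.
      rewrite (csum_ext _ _ (fun i' => Cplus (Cminus (Cminus
          (Cmult (cdelta i i') (cdelta i' i'')) (Cmult (cdelta i i') (P i' i'')))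
          (Cmult (P i i') (cdelta i' i''))) (Cmult (P i i') (P i' i'')))) by (intros; ring).
      rewrite csum_plus, !csum_minus, HPidem, !csum_cdelta_l, csum_cdelta_r by auto. ring.
    - unfold Q, P. rewrite csum_minus, csum_swap, <- csum_minus. apply csum_zero.
      intros q Hq. rewrite (csum_ext _ _ (fun i => Cmult (Cconj (U q i)) (U q i)))
        by (intros; ring).
      rewrite H by auto. unfold cdelta. rewrite Nat.eqb_refl. ring. }
  intros i i' Hi Hi'. specialize (HQ i i' Hi Hi'). unfold Q in HQ.
  change (P i i' = cdelta i i').
  replace (P i i') with (Cminus (cdelta i i') (Cminus (cdelta i i') (P i i'))) by ring.
  rewrite HQ. ring.
Qed.

Section GramSchmidt.
Variable n : nat.
Variable w : nat -> nat -> C.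

Definition inner (x y : nat -> C) : C := csum n (fun j => Cmult (Cconj (x j)) (y j)).
Definition gram p q := inner (w p) (w q).
Definition lincomb (a : nat -> C) (j : nat) : C := csum n (fun m => Cmult (a m) (w m j)).

(* Rows of a coefficient table [T] are coordinates in the family [w]; [gs_next T q] is the
   q-th Gram-Schmidt row computed from the rows [T l], [l < q]. *)
Definition gs_vec (T : nat -> nat -> C) p := lincomb (T p).
Definition gs_proj T q l := inner (gs_vec T l) (w q).
Definition gs_raw T q m := Cminus (cdelta m q) (csum q (fun l => Cmult (gs_proj T q l) (T l m))).
Definition gs_raw_vec T q := lincomb (gs_raw T q).
Definition gs_raw_norm T q := sqrt (rsum n (fun j => Cmod (gs_raw_vec T q j) ^ 2)).
Definition gs_next T q m := Cdiv (gs_raw T q m) (RtoC (gs_raw_norm T q)).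

Fixpoint gs_table (k : nat) : nat -> nat -> C :=
  match k with
  | O => fun _ _ => RtoC 0
  | S k => fun p m => if Nat.eqb p k then gs_next (gs_table k) k m else gs_table k p m
  end.

Definition gs_coef p m := gs_table (S p) p m.

Lemma gs_table_stable k p m : (p < k)%nat -> gs_table k p m = gs_coef p m.
Proof.
  induction k; intros H. lia.
  simpl. destruct (Nat.eqb_spec p k).
  - subst. unfold gs_coef. simpl. rewrite Nat.eqb_refl. auto.
  - apply IHk. lia.
Qed.

Lemma gs_next_ext T T' q m :
  (forall l m, (l < q)%nat -> T l m = T' l m) -> gs_next T q m = gs_next T' q m.
Proof.
  intros H.
  assert (Hproj : forall l, (l < q)%nat -> gs_proj T q l = gs_proj T' q l).
  { intros. unfold gs_proj, inner, gs_vec, lincomb. apply csum_ext; intros.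
    f_equal. f_equal. apply csum_ext; intros. rewrite H; auto. }
  assert (Hraw : forall m, gs_raw T q m = gs_raw T' q m).
  { intros. unfold gs_raw. f_equal. apply csum_ext; intros. rewrite Hproj, H; auto. }
  unfold gs_next, gs_raw_norm, gs_raw_vec, lincomb. rewrite Hraw. do 3 f_equal.
  apply rsum_ext; intros. f_equal. f_equal. apply csum_ext; intros. rewrite Hraw; auto.
Qed.

Lemma gs_coef_eq q m : gs_coef q m = gs_next gs_coef q m.
Proof.
  unfold gs_coef at 1. simpl. rewrite Nat.eqb_refl.
  apply gs_next_ext. intros. apply gs_table_stable; auto.
Qed.

Lemma inner_conj x y : Cconj (inner x y) = inner y x.
Proof.
  unfold inner. rewrite csum_conj. apply csum_ext; intros.
  rewrite Cmult_conj, Cconj_conj. ring.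
Qed.

Lemma inner_self x : inner x x = RtoC (rsum n (fun j => Cmod (x j) ^ 2)).
Proof. unfold inner. rewrite RtoC_rsum. apply csum_ext; intros. apply Cmult_conj_l_self. Qed.

Lemma inner_lincomb_l a y : inner (lincomb a) y = csum n (fun m => Cmult (Cconj (a m)) (inner (w m) y)).
Proof.
  unfold inner, lincomb.
  transitivity (csum n (fun j => csum n (fun m => Cmult (Cconj (a m)) (Cmult (Cconj (w m j)) (y j))))).
  - apply csum_ext; intros. rewrite csum_conj, <- csum_scal_r. apply csum_ext; intros.
    rewrite Cmult_conj. ring.
  - rewrite csum_swap. apply csum_ext; intros. rewrite csum_scal_l. auto.
Qed.

Lemma inner_scal_r x y a : inner x (fun j => Cmult a (y j)) = Cmult a (inner x y).
Proof. unfold inner. rewrite <- csum_scal_l. apply csum_ext; intros. ring. Qed.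

Lemma inner_scal_l x y a : inner (fun j => Cmult a (y j)) x = Cmult (Cconj a) (inner y x).
Proof. unfold inner. rewrite <- csum_scal_l. apply csum_ext; intros. rewrite Cmult_conj. ring. Qed.

Lemma inner_sub_comb_r x y (c : nat -> C) (z : nat -> nat -> C) k :
  inner x (fun j => Cminus (y j) (csum k (fun l => Cmult (c l) (z l j)))) =
  Cminus (inner x y) (csum k (fun l => Cmult (c l) (inner x (z l)))).
Proof.
  unfold inner.
  transitivity (Cminus (csum n (fun j => Cmult (Cconj (x j)) (y j)))
     (csum n (fun j => csum k (fun l => Cmult (c l) (Cmult (Cconj (x j)) (z l j)))))).
  - rewrite <- csum_minus. apply csum_ext; intros.
    rewrite (csum_ext k (fun l => Cmult (c l) (Cmult (Cconj (x i)) (z l i)))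
      (fun l => Cmult (Cconj (x i)) (Cmult (c l) (z l i))))
      by (intros; ring).
    rewrite csum_scal_l. ring.
  - f_equal. rewrite csum_swap. apply csum_ext; intros. rewrite csum_scal_l. auto.
Qed.

Lemma inner_sub_comb_l x y (c : nat -> C) (z : nat -> nat -> C) k :
  inner (fun j => Cminus (y j) (csum k (fun l => Cmult (c l) (z l j)))) x =
  Cminus (inner y x) (csum k (fun l => Cmult (Cconj (c l)) (inner (z l) x))).
Proof.
  rewrite <- inner_conj, inner_sub_comb_r, Cminus_conj, csum_conj, inner_conj.
  f_equal. apply csum_ext; intros. rewrite Cmult_conj, inner_conj. auto.
Qed.

End GramSchmidt.

Lemma Rabs_inv_sub1 x t : 0 < x -> Rabs (x ^ 2 - 1) <= t -> t <= 1/100 -> Rabs (/ x - 1) <= 2 * t.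
Proof.
  intros Hx Hxt Ht. apply Rabs_le_between in Hxt.
  assert (x >= 99/100) by (destruct (Rlt_or_le x (99/100)); nra).
  set (y := / x). assert (x * y = 1) by (unfold y; field; lra).
  assert (0 < y) by (unfold y; apply Rinv_0_lt_compat; lra).
  assert (y <= 2) by nra.
  apply Rabs_le. split; nra.
Qed.

(* If the Gram matrix of [w] is [E]-close to the identity, Gram-Schmidt changes the coefficient
   matrix (the identity before orthonormalisation) only by [O(E)]. *)
Section GramSchmidtStability.
Variable n : nat.
Variable w : nat -> nat -> C.
Variable E : nat -> nat -> R.
Variables d0 d1 : R.
Hypothesis Hgram : forall p q, (p < n)%nat -> (q < n)%nat ->
  Cmod (Cminus (gram n w p q) (cdelta p q)) <= E p q.
Hypothesis Esym : forall p q, E p q = E q p.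
Hypothesis Epos : forall p q, 0 <= E p q.
Hypothesis Ebound : forall p q, (p < n)%nat -> (q < n)%nat -> E p q <= d0.
Hypothesis Hd0 : d0 <= 1/100.
Hypothesis Econv : forall p q, (p < n)%nat -> (q < n)%nat ->
  rsum n (fun r => E p r * E r q) <= d1 * E p q.
Hypothesis Hd1 : 0 <= d1 <= 1/100.
Hypothesis Ecol : forall q, (q < n)%nat -> rsum (S q) (fun r => E r q) <= 1/100.

Notation a := (gs_coef n w).
Notation u := (gs_vec n w a).

Definition gs_inv q :=
  (forall p m, (p < q)%nat -> (p < m)%nat -> a p m = RtoC 0) /\
  (forall p p', (p < q)%nat -> (p' < q)%nat -> inner n (u p) (u p') = cdelta p p') /\
  (forall p m, (p < q)%nat -> (m < p)%nat -> Cmod (a p m) <= 2 * E m p) /\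
  (forall p, (p < q)%nat -> Cmod (Cminus (a p p) (RtoC 1)) <= 2 * rsum (S p) (fun r => E r p)).

Section GramSchmidtStep.
Variable q : nat.
Hypothesis Hq : (q < n)%nat.
Hypothesis IH : gs_inv q.

Let b l := gs_proj n w a q l.

Lemma gs_coef_prev_bound l m : (l < q)%nat ->
  Cmod (a l m) <= 2 * E m l + (if Nat.eqb m l then 102/100 else 0).
Proof.
  intros Hl. destruct IH as [Hs [_ [Hb Hd]]].
  destruct (lt_eq_lt_dec m l) as [[H|H]|H].
  - destruct (Nat.eqb_spec m l); [lia|]. pose proof (Hb l m Hl H). lra.
  - subst m. rewrite Nat.eqb_refl. pose proof (Hd l Hl).
    replace (a l l) with (Cplus (Cminus (a l l) (RtoC 1)) (RtoC 1)) by ring.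
    eapply Rle_trans. apply Cmod_triangle. rewrite Cmod_1.
    pose proof (Ecol l ltac:(lia)). pose proof (Epos l l). lra.
  - rewrite Hs, Cmod_0 by auto. destruct (Nat.eqb m l); pose proof (Epos m l); lra.
Qed.

Lemma gs_proj_bound l : (l < q)%nat -> Cmod (b l) <= 105/100 * E l q.
Proof.
  intros Hl. destruct IH as [Hs _].
  unfold b, gs_proj, gs_vec. rewrite inner_lincomb_l.
  eapply Rle_trans. apply Cmod_csum.
  eapply Rle_trans. apply (rsum_le _ _
    (fun m => 2 * (E l m * E m q) + (if Nat.eqb m l then 102/100 * E m q else 0))).
  { intros m Hm. rewrite Cmod_mult, Cmod_conj.
    pose proof (Epos l m). pose proof (Epos m q).
    destruct (le_lt_dec m l).
    - assert (Cmod (inner n (w m) (w q)) <= E m q).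
      { pose proof (Hgram m q Hm Hq) as Hg. unfold gram, cdelta in Hg.
        destruct (Nat.eqb_spec m q). lia.
        replace (Cminus (inner n (w m) (w q)) (RtoC 0)) with (inner n (w m) (w q)) in Hg by ring.
        auto. }
      pose proof (gs_coef_prev_bound l m Hl). rewrite (Esym l m).
      pose proof (Cmod_ge_0 (a l m)). destruct (Nat.eqb m l); nra.
    - rewrite Hs, Cmod_0 by auto. destruct (Nat.eqb m l); nra. }
  rewrite rsum_plus, rsum_scal_l, rsum_if_eq by lia.
  pose proof (Econv l q ltac:(lia) Hq). pose proof (Epos l q). nra.
Qed.

Lemma gs_raw_offdiag_bound m : (m < q)%nat -> Cmod (gs_raw n w a q m) <= 11/10 * E m q.
Proof.
  intros Hm. unfold gs_raw, cdelta. destruct (Nat.eqb_spec m q). lia.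
  replace (Cminus (RtoC 0) _) with (Copp (csum q (fun l => Cmult (gs_proj n w a q l) (a l m)))) by ring.
  rewrite Cmod_opp. eapply Rle_trans. apply Cmod_csum.
  eapply Rle_trans. apply (rsum_le _ _
    (fun l => 21/10 * (E m l * E l q) + (if Nat.eqb l m then 1071/1000 * E l q else 0))).
  { intros l Hl. rewrite Cmod_mult. fold (b l). pose proof (gs_proj_bound l Hl).
    pose proof (gs_coef_prev_bound l m Hl).
    pose proof (Cmod_ge_0 (b l)). pose proof (Cmod_ge_0 (a l m)).
    pose proof (Epos l q). pose proof (Epos m l).
    destruct (Nat.eqb_spec m l), (Nat.eqb_spec l m); try lia; [subst|]; nra. }
  eapply Rle_trans. apply (rsum_le_mono q n). lia.
  { intros. pose proof (Epos m i). pose proof (Epos i q). destruct (Nat.eqb i m); nra. }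
  rewrite rsum_plus, rsum_scal_l, rsum_if_eq by lia.
  pose proof (Econv m q ltac:(lia) Hq). pose proof (Epos m q). nra.
Qed.

Lemma gs_raw_diag : gs_raw n w a q q = RtoC 1.
Proof.
  destruct IH as [Hs _]. unfold gs_raw, cdelta. rewrite Nat.eqb_refl, csum_zero. ring.
  intros l Hl. rewrite Hs by auto. ring.
Qed.

Lemma gs_raw_upper m : (q < m)%nat -> gs_raw n w a q m = RtoC 0.
Proof.
  destruct IH as [Hs _]. intros H. unfold gs_raw, cdelta.
  destruct (Nat.eqb_spec m q). lia. rewrite csum_zero. ring.
  intros l Hl. rewrite Hs by lia. ring.
Qed.

Lemma gs_raw_vec_eq :
  gs_raw_vec n w a q = fun j => Cminus (w q j) (csum q (fun l => Cmult (b l) (u l j))).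
Proof.
  apply functional_extensionality. intros j. unfold gs_raw_vec, lincomb, gs_raw.
  rewrite (csum_ext n _ (fun m => Cminus (Cmult (w m j) (cdelta m q))
                                   (csum q (fun l => Cmult (b l) (Cmult (a l m) (w m j)))))).
  - rewrite csum_minus, csum_cdelta_r by auto. f_equal.
    rewrite csum_swap. apply csum_ext. intros l _.
    unfold gs_vec, lincomb. rewrite csum_scal_l. auto.
  - intros m _. rewrite (csum_ext q (fun l => Cmult (b l) (Cmult (a l m) (w m j)))
                                    (fun l => Cmult (Cmult (b l) (a l m)) (w m j))) by (intros; ring).
    rewrite csum_scal_r. unfold b. ring.
Qed.

Lemma gs_raw_vec_orth p : (p < q)%nat -> inner n (u p) (gs_raw_vec n w a q) = RtoC 0.
Proof.
  intros Hp. destruct IH as [_ [Ho _]]. rewrite gs_raw_vec_eq, inner_sub_comb_r.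
  rewrite (csum_ext q _ (fun l => Cmult (b l) (cdelta l p))).
  - rewrite csum_cdelta_r by auto. unfold b, gs_proj. ring.
  - intros l Hl. rewrite Ho, cdelta_sym by auto. auto.
Qed.

Let raw_norm2 := rsum n (fun j => Cmod (gs_raw_vec n w a q j) ^ 2).

Lemma gs_raw_vec_norm2 :
  raw_norm2 = Re (gram n w q q) - rsum q (fun l => Cmod (b l) ^ 2).
Proof.
  assert (H : RtoC raw_norm2 = Cminus (gram n w q q) (RtoC (rsum q (fun l => Cmod (b l) ^ 2)))).
  { unfold raw_norm2. rewrite <- inner_self, gs_raw_vec_eq at 1. rewrite inner_sub_comb_l.
    rewrite (csum_zero q (fun l => Cmult (Cconj (b l)) (inner n (u l) (gs_raw_vec n w a q)))).
    2:{ intros l Hl. rewrite gs_raw_vec_orth by auto. ring. }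
    rewrite gs_raw_vec_eq, inner_sub_comb_r, RtoC_rsum.
    rewrite (csum_ext q _ (fun l => RtoC (Cmod (b l) ^ 2))).
    - unfold gram. ring.
    - intros l Hl. rewrite <- inner_conj. apply Cmult_conj_r_self. }
  change raw_norm2 with (Re (RtoC raw_norm2)). rewrite H.
  unfold Cminus, Cplus, Copp, RtoC, Re; simpl. ring.
Qed.

Lemma gs_raw_norm2_near1 : Rabs (raw_norm2 - 1) <= rsum (S q) (fun r => E r q).
Proof.
  rewrite gs_raw_vec_norm2.
  assert (Rabs (Re (gram n w q q) - 1) <= E q q).
  { pose proof (Hgram q q Hq Hq) as H. unfold cdelta in H; rewrite Nat.eqb_refl in H.
    eapply Rle_trans; [|apply H]. eapply Rle_trans; [|apply re_le_Cmod]. right. simpl. f_equal. }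
  assert (0 <= rsum q (fun l => Cmod (b l) ^ 2)) by (apply rsum_nonneg; intros; apply pow2_ge_0).
  assert (rsum q (fun l => Cmod (b l) ^ 2) <= rsum q (fun l => (111/10000) * E l q)).
  { apply rsum_le. intros l Hl. pose proof (gs_proj_bound l Hl). pose proof (Ebound l q ltac:(lia) Hq).
    pose proof (Cmod_ge_0 (b l)). pose proof (Epos l q). nra. }
  rewrite rsum_scal_l in H1. cbn [rsum].
  assert (0 <= rsum q (fun r => E r q)) by (apply rsum_nonneg; intros; apply Epos).
  apply Rabs_le_between in H. apply Rabs_le. split; nra.
Qed.

Let nu := gs_raw_norm n w a q.

Lemma gs_raw_norm_spec : 0 < nu /\ nu ^ 2 = raw_norm2 /\ 99/100 <= nu /\
  Rabs (nu ^ 2 - 1) <= rsum (S q) (fun r => E r q).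
Proof.
  pose proof gs_raw_norm2_near1 as H. pose proof (Ecol q Hq).
  apply Rabs_le_between in H as H'.
  assert (Hnu : nu = sqrt raw_norm2) by reflexivity.
  assert (Hsq : nu ^ 2 = raw_norm2) by (rewrite Hnu; apply pow2_sqrt; lra).
  assert (0 < nu) by (rewrite Hnu; apply sqrt_lt_R0; lra).
  split; [|split; [|split]]; auto.
  - destruct (Rlt_or_le nu (99/100)); nra.
  - rewrite Hsq. auto.
Qed.

Lemma gs_vec_step : u q = fun j => Cmult (Cinv (RtoC nu)) (gs_raw_vec n w a q j).
Proof.
  destruct gs_raw_norm_spec as [Hnu _].
  apply functional_extensionality. intros j.
  unfold gs_vec, lincomb, gs_raw_vec, lincomb. rewrite <- csum_scal_l.
  apply csum_ext. intros m _. rewrite gs_coef_eq. unfold gs_next. fold nu. field.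
  intros H. apply (f_equal Re) in H. simpl in H. lra.
Qed.

Lemma gs_coef_upper m : (q < m)%nat -> a q m = RtoC 0.
Proof.
  intros H. destruct gs_raw_norm_spec as [Hnu _].
  rewrite gs_coef_eq. unfold gs_next. rewrite gs_raw_upper by auto.
  apply injective_projections; simpl; field; fold nu; lra.
Qed.

Lemma gs_vec_orth_prev p : (p < q)%nat -> inner n (u p) (u q) = RtoC 0.
Proof. intros. rewrite gs_vec_step, inner_scal_r, gs_raw_vec_orth by auto. ring. Qed.

Lemma gs_vec_norm1 : inner n (u q) (u q) = RtoC 1.
Proof.
  destruct gs_raw_norm_spec as [Hnu [Hnu2 _]].
  rewrite gs_vec_step, inner_scal_l, inner_scal_r, inner_self. fold raw_norm2.
  rewrite <- Hnu2, <- RtoC_inv by lra.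
  apply injective_projections; simpl; field; lra.
Qed.

Lemma gs_coef_offdiag_bound m : (m < q)%nat -> Cmod (a q m) <= 2 * E m q.
Proof.
  intros Hm. destruct gs_raw_norm_spec as [Hnu [_ [Hnu1 _]]].
  rewrite gs_coef_eq. unfold gs_next. fold nu.
  rewrite Cmod_div, Cmod_R, Rabs_pos_eq by (try lra; intros H; apply (f_equal Re) in H; simpl in H; lra).
  pose proof (gs_raw_offdiag_bound m Hm). pose proof (Epos m q).
  apply Rmult_le_reg_r with nu. lra. unfold Rdiv. rewrite Rmult_assoc, Rinv_l by lra.
  pose proof (Cmod_ge_0 (gs_raw n w a q m)). nra.
Qed.

Lemma gs_coef_diag_bound : Cmod (Cminus (a q q) (RtoC 1)) <= 2 * rsum (S q) (fun r => E r q).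
Proof.
  destruct gs_raw_norm_spec as [Hnu [_ [_ Hnub]]].
  rewrite gs_coef_eq. unfold gs_next. fold nu. rewrite gs_raw_diag.
  replace (Cminus (Cdiv (RtoC 1) (RtoC nu)) (RtoC 1)) with (RtoC (/ nu - 1))
    by (apply injective_projections; simpl; field; lra).
  rewrite Cmod_R. apply Rabs_inv_sub1; auto.
Qed.

Lemma gs_inv_succ : gs_inv (S q).
Proof.
  destruct IH as [Hs [Ho [Hb Hd]]].
  split; [|split; [|split]].
  - intros p m Hp Hm. destruct (Nat.eq_dec p q).
    + subst. apply gs_coef_upper; auto.
    + apply Hs; lia.
  - intros p p' Hp Hp'.
    destruct (Nat.eq_dec p q), (Nat.eq_dec p' q); subst.
    + rewrite gs_vec_norm1. unfold cdelta. rewrite Nat.eqb_refl. auto.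
    + rewrite <- inner_conj, gs_vec_orth_prev by lia. unfold cdelta.
      destruct (Nat.eqb_spec q p'). lia. apply injective_projections; simpl; lra.
    + rewrite gs_vec_orth_prev by lia. unfold cdelta. destruct (Nat.eqb_spec p q). lia. auto.
    + apply Ho; lia.
  - intros p m Hp Hm. destruct (Nat.eq_dec p q).
    + subst. apply gs_coef_offdiag_bound; auto.
    + apply Hb; lia.
  - intros p Hp. destruct (Nat.eq_dec p q).
    + subst. apply gs_coef_diag_bound.
    + apply Hd; lia.
Qed.

End GramSchmidtStep.

Lemma gs_inv_le q : (q <= n)%nat -> gs_inv q.
Proof.
  induction q; intros H.
  - repeat split; intros; lia.
  - apply gs_inv_succ; [lia|]. apply IHq. lia.
Qed.

Lemma gs_vec_sub_bound p i : gs_inv n -> (p < n)%nat ->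
  Cmod (Cminus (u p i) (w p i)) <=
  2 * rsum (S p) (fun r => E r p) * Cmod (w p i) + rsum p (fun m => 2 * E m p * Cmod (w m i)).
Proof.
  intros [Hs [_ [Hb Hd]]] Hp.
  assert (Hdiff : Cminus (u p i) (w p i) =
                  csum n (fun m => Cmult (Cminus (a p m) (cdelta m p)) (w m i))).
  { unfold gs_vec, lincomb.
    rewrite (csum_ext n (fun m => Cmult (Cminus (a p m) (cdelta m p)) (w m i))
      (fun m => Cminus (Cmult (a p m) (w m i)) (Cmult (w m i) (cdelta m p)))) by (intros; ring).
    rewrite csum_minus, csum_cdelta_r by auto. auto. }
  rewrite Hdiff. eapply Rle_trans. apply Cmod_csum.
  eapply Rle_trans. apply (rsum_le _ _ (fun m =>
    (if Nat.eqb m p then 2 * rsum (S p) (fun r => E r p) * Cmod (w p i) else 0)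
    + (if Nat.ltb m p then 2 * E m p * Cmod (w m i) else 0))).
  - intros m Hm. rewrite Cmod_mult. pose proof (Cmod_ge_0 (w m i)).
    unfold cdelta. destruct (Nat.eqb_spec m p), (Nat.ltb_spec m p); try lia.
    + subst m. pose proof (Hd p Hp). nra.
    + replace (Cminus (a p m) (RtoC 0)) with (a p m) by ring. pose proof (Hb p m Hp H0). nra.
    + rewrite Hs by lia. replace (Cminus (RtoC 0) (RtoC 0)) with (RtoC 0) by ring.
      rewrite Cmod_0. lra.
  - rewrite rsum_plus, rsum_if_eq, rsum_if_lt by lia. lra.
Qed.

End GramSchmidtStability.

(* Enumeration [0, -1, 1, -2, 2, ...] of [Z]: its first [2N+1] values form [[-N, N]]. *)
Definition zenum (p : nat) : Z :=
  let z := Z.of_nat p in if Z.eqb (z mod 2) 0 then (z / 2)%Z else (- ((z + 1) / 2))%Z.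
Definition zrank (k : Z) : nat := Z.to_nat (if Z.leb 0 k then 2 * k else - 2 * k - 1)%Z.

Lemma zrank_zenum p : zrank (zenum p) = p.
Proof.
  unfold zenum, zrank. destruct (Z.eqb_spec (Z.of_nat p mod 2) 0).
  - destruct (Z.leb_spec 0 (Z.of_nat p / 2)); Z.div_mod_to_equations; lia.
  - destruct (Z.leb_spec 0 (- ((Z.of_nat p + 1) / 2))); Z.div_mod_to_equations; lia.
Qed.

Lemma zenum_zrank k : zenum (zrank k) = k.
Proof.
  unfold zrank, zenum. destruct (Z.leb_spec 0 k); rewrite Z2Nat.id by lia.
  - destruct (Z.eqb_spec ((2 * k) mod 2) 0); Z.div_mod_to_equations; lia.
  - destruct (Z.eqb_spec ((-2 * k - 1) mod 2) 0); Z.div_mod_to_equations; lia.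
Qed.

Lemma zenum_inj p p' : zenum p = zenum p' -> p = p'.
Proof. intros H. rewrite <- (zrank_zenum p), <- (zrank_zenum p'), H. auto. Qed.

Lemma zenum_bound (N p : nat) : (p < 2 * N + 1)%nat -> (- Z.of_nat N <= zenum p <= Z.of_nat N)%Z.
Proof.
  intros H. unfold zenum.
  destruct (Z.eqb_spec (Z.of_nat p mod 2) 0); Z.div_mod_to_equations; lia.
Qed.

Lemma zrank_bound (N : nat) k : (- Z.of_nat N <= k <= Z.of_nat N)%Z -> (zrank k < 2 * N + 1)%nat.
Proof. intros H. unfold zrank. destruct (Z.leb_spec 0 k); lia. Qed.

Lemma zrank_le k : (zrank k <= 2 * Z.abs_nat k)%nat.
Proof. unfold zrank. destruct (Z.leb_spec 0 k); lia. Qed.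

Lemma zenum_even M : zenum (2 * M) = Z.of_nat M.
Proof. unfold zenum. destruct (Z.eqb_spec (Z.of_nat (2 * M) mod 2) 0); Z.div_mod_to_equations; lia. Qed.

Lemma zenum_odd M : zenum (2 * M + 1) = (- Z.of_nat (S M))%Z.
Proof.
  unfold zenum. destruct (Z.eqb_spec (Z.of_nat (2 * M + 1) mod 2) 0); Z.div_mod_to_equations; lia.
Qed.

Lemma cdelta_kdelta p q : cdelta p q = RtoC (kdelta (zenum p) (zenum q)).
Proof.
  unfold cdelta, kdelta.
  destruct (Z.eq_dec (zenum p) (zenum q)) as [Heq|Hneq].
  - apply zenum_inj in Heq. subst. rewrite Nat.eqb_refl. auto.
  - destruct (Nat.eqb_spec p q); [subst; contradiction|auto].
Qed.

Lemma Zinterval_snoc a b : (a <= b + 1)%Z -> Zinterval a (b + 1) = Zinterval a b ++ (b + 1)%Z :: nil.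
Proof.
  intros H. unfold Zinterval.
  replace (Z.to_nat (b + 1 - a + 1)) with (S (Z.to_nat (b - a + 1))) by lia.
  rewrite seq_S, map_app. simpl. do 2 f_equal. lia.
Qed.

Lemma Zinterval_cons a b : (a <= b + 1)%Z -> Zinterval (a - 1) b = (a - 1)%Z :: Zinterval a b.
Proof.
  intros H. unfold Zinterval.
  replace (Z.to_nat (b - (a - 1) + 1)) with (S (Z.to_nat (b - a + 1))) by lia.
  simpl. f_equal. lia. rewrite <- seq_shift, map_map. apply map_ext. intros. lia.
Qed.

Lemma Zinterval_succ_sym (M : nat) : Zinterval (- Z.of_nat (S M)) (Z.of_nat (S M)) =
  (- Z.of_nat (S M))%Z :: Zinterval (- Z.of_nat M) (Z.of_nat M) ++ (Z.of_nat (S M)) :: nil.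
Proof.
  replace (- Z.of_nat (S M))%Z with (- Z.of_nat M - 1)%Z by lia.
  rewrite Zinterval_cons by lia. f_equal.
  replace (Z.of_nat (S M)) with (Z.of_nat M + 1)%Z by lia. apply Zinterval_snoc. lia.
Qed.

Lemma fold_Rplus_shift l x : fold_right Rplus x l = fold_right Rplus 0 l + x.
Proof. induction l; simpl; [lra|]. rewrite IHl. lra. Qed.

Lemma fold_Cplus_shift l x : fold_right Cplus x l = Cplus (fold_right Cplus (RtoC 0) l) x.
Proof. induction l; simpl. ring. rewrite IHl. ring. Qed.

Lemma sumR_zenum M f : sumR (- Z.of_nat M) (Z.of_nat M) f = rsum (2 * M + 1) (fun p => f (zenum p)).
Proof.
  induction M.
  - unfold sumR. simpl. change (zenum 0) with 0%Z. lra.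
  - unfold sumR in *. rewrite Zinterval_succ_sym, map_cons, map_app.
    cbn [fold_right]. rewrite fold_right_app. cbn [map fold_right].
    replace (2 * S M + 1)%nat with (S (S (2 * M + 1))) by lia. cbn [rsum].
    rewrite <- IHM, zenum_odd. replace (S (2 * M + 1)) with (2 * (S M))%nat by lia.
    rewrite zenum_even, fold_Rplus_shift. lra.
Qed.

Lemma sumC_zenum M f : sumC (- Z.of_nat M) (Z.of_nat M) f = csum (2 * M + 1) (fun p => f (zenum p)).
Proof.
  induction M.
  - unfold sumC. simpl. change (zenum 0) with 0%Z. ring.
  - unfold sumC in *. rewrite Zinterval_succ_sym, map_cons, map_app.
    cbn [fold_right]. rewrite fold_right_app. cbn [map fold_right].
    replace (2 * S M + 1)%nat with (S (S (2 * M + 1))) by lia. cbn [csum].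
    rewrite <- IHM, zenum_odd. replace (S (2 * M + 1)) with (2 * (S M))%nat by lia.
    rewrite zenum_even, fold_Cplus_shift. ring.
Qed.

Lemma sumR_zenum_pred M f :
  sumR (- Z.of_nat M) (Z.of_nat M - 1) f = rsum (2 * M) (fun p => f (zenum p)).
Proof.
  pose proof (sumR_zenum M f) as H. unfold sumR in *.
  replace (Z.of_nat M) with (Z.of_nat M - 1 + 1)%Z in H at 2 by lia.
  rewrite Zinterval_snoc, map_app, fold_right_app in H by lia. cbn [map fold_right] in H.
  rewrite fold_Rplus_shift in H. replace (2 * M + 1)%nat with (S (2 * M)) in H by lia.
  cbn [rsum] in H. rewrite zenum_even in H.
  replace (Z.of_nat M - 1 + 1)%Z with (Z.of_nat M) in H by lia. lra.
Qed.

Definition pairseq (a : Z -> R) (n : nat) : R :=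
  if Nat.eqb n 0 then a 0%Z else a (Z.of_nat n) + a (- Z.of_nat n)%Z.

Lemma ZsumR_is_series a s : ZsumR a s -> is_series (pairseq a) s.
Proof. auto. Qed.

Lemma pairseq_nonneg a : (forall j, 0 <= a j) -> forall n, 0 <= pairseq a n.
Proof.
  intros H n. unfold pairseq. destruct (Nat.eqb n 0); auto.
  pose proof (H (Z.of_nat n)); pose proof (H (- Z.of_nat n)%Z). lra.
Qed.

Lemma sum_n_pairseq a M : sum_n (pairseq a) M = rsum (2 * M + 1) (fun p => a (zenum p)).
Proof.
  induction M.
  - rewrite sum_O. simpl. change (zenum 0) with 0%Z. unfold pairseq. simpl. lra.
  - rewrite sum_Sn, IHM. replace (2 * S M + 1)%nat with (S (S (2 * M + 1))) by lia. cbn [rsum].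
    rewrite zenum_odd. replace (S (2 * M + 1)) with (2 * (S M))%nat by lia. rewrite zenum_even.
    unfold pairseq. simpl Nat.eqb. cbv iota. unfold plus. simpl. lra.
Qed.

Lemma sum_n_le_mono (b : nat -> R) M M' :
  (forall n, 0 <= b n) -> (M <= M')%nat -> sum_n b M <= sum_n b M'.
Proof.
  intros H Hle. induction Hle. lra.
  rewrite sum_Sn. unfold plus; simpl. pose proof (H (S m)). lra.
Qed.

Lemma is_series_partial_le (b : nat -> R) s M : is_series b s -> (forall n, 0 <= b n) -> sum_n b M <= s.
Proof.
  intros H Hp.
  assert (Rbar_le (sum_n b M) s); [|auto].
  apply (is_lim_seq_le_loc (fun _ => sum_n b M) (sum_n b)); [|apply is_lim_seq_const|apply H].
  exists M. intros. apply sum_n_le_mono; auto.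
Qed.

Lemma is_series_tail_bound (a b : nat -> R) s sb M : is_series a s -> is_series b sb ->
  (forall n, (M < n)%nat -> Rabs (a n) <= b n) -> (forall n, 0 <= b n) ->
  Rabs (s - sum_n a M) <= sb.
Proof.
  intros Ha Hb Hd Hp.
  assert (Hm : forall M', (M <= M')%nat -> Rabs (sum_n a M' - sum_n a M) <= sum_n b M' - sum_n b M).
  { intros M' HM. induction HM. rewrite Rminus_diag, Rabs_R0. lra.
    rewrite !sum_Sn. unfold plus; simpl.
    replace (sum_n a m + a (S m) - sum_n a M) with ((sum_n a m - sum_n a M) + a (S m)) by ring.
    eapply Rle_trans. apply Rabs_triang. pose proof (Hd (S m) ltac:(lia)). lra. }
  assert (Hl : is_lim_seq (fun M' => Rabs (sum_n a M' - sum_n a M)) (Rabs (s - sum_n a M))).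
  { apply (is_lim_seq_abs _ (s - sum_n a M)).
    apply is_lim_seq_minus'. apply Ha. apply is_lim_seq_const. }
  assert (Rbar_le (Rabs (s - sum_n a M)) sb); [|auto].
  apply (is_lim_seq_le_loc (fun M' => Rabs (sum_n a M' - sum_n a M)) (fun _ => sb));
    [|auto|apply is_lim_seq_const].
  exists M. intros M' HM.
  pose proof (Hm M' HM). pose proof (is_series_partial_le b sb M' Hb Hp).
  pose proof (sum_n_le_mono b 0 M Hp ltac:(lia)). rewrite sum_O in H1. pose proof (Hp 0%nat). lra.
Qed.

Lemma jbr_ge1 k : 1 <= jbr k.
Proof. unfold jbr. pose proof (IZR_le 0 (Z.abs k) (Z.abs_nonneg k)). lra. Qed.

Lemma jbr_sub_sym a b : jbr (a - b) = jbr (b - a).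
Proof. unfold jbr. do 2 f_equal. lia. Qed.

Lemma Rpower_pos x y : 0 < Rpower x y.
Proof. apply exp_pos. Qed.

Lemma Rpower_ge1 x y : 1 <= x -> 0 <= y -> 1 <= Rpower x y.
Proof. intros. rewrite <- (Rpower_O x) by lra. apply Rle_Rpower; lra. Qed.

Lemma Rpower_1_base y : Rpower 1 y = 1.
Proof. unfold Rpower. rewrite ln_1, Rmult_0_r, exp_0. auto. Qed.

Lemma exp_neg_abs_le1 b z : 0 <= b -> exp (- b * IZR (Z.abs z)) <= 1.
Proof.
  intros. rewrite <- exp_0. pose proof (IZR_le 0 (Z.abs z) (Z.abs_nonneg z)).
  destruct (Req_dec (- b * IZR (Z.abs z)) 0) as [E|E]. rewrite E; lra.
  left. apply exp_increasing. nra.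
Qed.

Lemma sqrt2_le2 : sqrt 2 <= 2.
Proof. pose proof Rlt_sqrt2_0. pose proof (sqrt_sqrt 2 ltac:(lra)). nra. Qed.

Definition cnu_kernel (beta nu : R) (s m : Z) (k : Z) : R :=
  exp (- beta * IZR (Z.abs (s - k)) - beta * IZR (Z.abs (k - m)))
  / (Rpower (jbr (s - k)) nu * Rpower (jbr (k - m)) nu).

Lemma cnu_kernel_nonneg beta nu s m k : 0 <= cnu_kernel beta nu s m k.
Proof.
  apply Rlt_le, Rdiv_lt_0_compat. apply exp_pos. apply Rmult_lt_0_compat; apply Rpower_pos.
Qed.

Lemma is_c_nu_pos nu cnu : is_c_nu nu cnu -> 0 < cnu.
Proof.
  intros H. destruct (H 0 (Rle_refl 0) 0%Z 0%Z) as [S [HS HSle]].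
  pose proof (is_series_partial_le _ _ 0 (ZsumR_is_series _ _ HS)
                (pairseq_nonneg _ (cnu_kernel_nonneg 0 nu 0 0))) as H0.
  rewrite sum_O in H0. unfold pairseq, cnu_kernel in H0. simpl in H0.
  unfold jbr in *. simpl in *. rewrite !Rplus_0_l, Rpower_1_base in *.
  replace (- 0 * 0 - 0 * 0) with 0 in H0 by ring. replace (- 0 * 0) with 0 in HSle by ring.
  rewrite exp_0 in *. lra.
Qed.

Lemma Nmodel_off_antidiag h v j k : j <> k -> (- j)%Z <> k -> Nmodel h v j k = RtoC 0.
Proof.
  intros H1 H2. unfold Nmodel, kdelta.
  destruct (Z.eq_dec j k); [lia|]. destruct (Z.eq_dec (-j) k); [lia|]. ring.
Qed.

Lemma window_sum_small (N : nat) X : 0 <= X -> 400 * X < INR N + 1 ->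
  (2 * INR N + 1) * (2 * X / (INR N + 1) ^ 2) <= 1/100.
Proof.
  intros HX HN. pose proof (pos_INR N).
  apply Rmult_le_reg_r with ((INR N + 1) ^ 2). nra.
  replace ((2 * INR N + 1) * (2 * X / (INR N + 1) ^ 2) * (INR N + 1) ^ 2)
    with ((2 * INR N + 1) * (2 * X)) by (field; lra).
  nra.
Qed.

Lemma INR_S_eventually_gt (x : R) : exists N0 : nat, forall N, (N0 <= N)%nat -> x < INR N + 1.
Proof.
  destruct (archimed x) as [H1 _]. exists (Z.to_nat (up x)). intros N HN.
  apply le_INR in HN. rewrite INR_IZR_INZ in HN.
  assert (IZR (up x) <= IZR (Z.of_nat (Z.to_nat (up x)))) by (apply IZR_le; lia). lra.
Qed.

Lemma Cmod_le_Re_Im z e : Rabs (Re z) <= e -> Rabs (Im z) <= e -> Cmod z <= 2 * e.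
Proof.
  intros HRe HIm. eapply Rle_trans. apply Cmod_2Rmax.
  assert (Hmax : Rmax (Rabs (fst z)) (Rabs (snd z)) <= e) by (apply Rmax_lub; auto).
  assert (0 <= Rmax (Rabs (fst z)) (Rabs (snd z))) by (eapply Rle_trans; [apply Rabs_pos|apply Rmax_l]).
  pose proof sqrt2_le2. pose proof Rlt_sqrt2_0. nra.
Qed.

Section TruncationEstimates.
Variables (h alpha beta c cnu : R) (v : Z -> R -> C) (NN : Z -> Z -> C) (N : nat).
Hypothesis halpha : 2 < alpha.
Hypothesis hbeta : 0 <= beta.
Hypothesis hc : 0 < c.
Hypothesis hcnu : is_c_nu (alpha - 1) cnu.
Hypothesis hNN : unitary_Z NN.
Hypothesis hbound : forall j k : Z,
  Cmod (Cminus (NN j k) (Nmodel h v j k))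
  <= c * exp (- beta * IZR (Z.abs (j - k))) / (jbr j * jbr k * Rpower (jbr (j - k)) (alpha - 1)).

Let eps := eps_jk c cnu alpha beta N.
Let Q := (INR N + 1) ^ 2.

Lemma Q_pos : 0 < Q.
Proof. unfold Q. pose proof (pos_INR N). nra. Qed.

Lemma eps_nonneg l k : 0 <= eps l k.
Proof.
  unfold eps, eps_jk. fold Q. pose proof (is_c_nu_pos _ _ hcnu).
  pose proof (jbr_ge1 l). pose proof (jbr_ge1 k). pose proof Q_pos.
  pose proof (Rpower_pos (jbr (l - k)) (alpha - 1)). pose proof (exp_pos (- beta * IZR (Z.abs (l - k)))).
  apply Rlt_le, Rdiv_lt_0_compat.
  - apply Rmult_lt_0_compat; [|lra]. apply Rmult_lt_0_compat; nra.
  - apply Rmult_lt_0_compat; [|lra]. apply Rmult_lt_0_compat; [|lra]. nra.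
Qed.

Lemma eps_sym l k : eps l k = eps k l.
Proof.
  unfold eps, eps_jk. rewrite (jbr_sub_sym l k).
  replace (Z.abs (l - k)) with (Z.abs (k - l)) by lia. f_equal. ring.
Qed.

Lemma eps_le_uniform l k : eps l k <= c ^ 2 * cnu / Q.
Proof.
  unfold eps, eps_jk. fold Q. pose proof (is_c_nu_pos _ _ hcnu).
  pose proof (jbr_ge1 l). pose proof (jbr_ge1 k). pose proof Q_pos.
  pose proof (Rpower_ge1 (jbr (l - k)) (alpha - 1) (jbr_ge1 _) ltac:(lra)).
  pose proof (exp_neg_abs_le1 beta (l - k) hbeta). pose proof (exp_pos (- beta * IZR (Z.abs (l - k)))).
  set (e := exp _) in *. set (P := Rpower _ _) in *.
  assert (jbr l * jbr k >= 1) by nra.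
  assert (jbr l * jbr k * Q >= Q) by nra.
  assert (jbr l * jbr k * Q * P >= Q) by nra.
  assert (0 < c ^ 2) by (apply pow_lt; lra).
  unfold Rdiv. apply Rmult_le_compat.
  - apply Rlt_le. apply Rmult_lt_0_compat; [|lra]. apply Rmult_lt_0_compat; lra.
  - apply Rlt_le, Rinv_0_lt_compat. lra.
  - rewrite <- (Rmult_1_r (c ^ 2 * cnu)) at 2. apply Rmult_le_compat_l; nra.
  - apply Rinv_le_contravar; lra.
Qed.

(* The model entry is supported on [j = k] and [j = -k], so outside the window it vanishes. *)
Lemma NN_outside_bound j k : (Z.of_nat N < Z.abs j)%Z -> (Z.abs k <= Z.of_nat N)%Z ->
  Cmod (NN j k)
  <= c * exp (- beta * IZR (Z.abs (j - k))) / (jbr j * jbr k * Rpower (jbr (j - k)) (alpha - 1)).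
Proof.
  intros H1 H2. pose proof (hbound j k) as H. rewrite Nmodel_off_antidiag in H by lia.
  replace (Cminus (NN j k) (RtoC 0)) with (NN j k) in H by ring. auto.
Qed.

Lemma jbr_outside j : (Z.of_nat N < Z.abs j)%Z -> INR N + 1 <= jbr j.
Proof. intros H. unfold jbr. rewrite INR_IZR_INZ. apply Rplus_le_compat_r, IZR_le. lia. Qed.

(* The factor [1 / Q] is [1 / <j>^2] with [|j| > N]. *)
Lemma NN_outside_prod_bound j k l :
  (Z.of_nat N < Z.abs j)%Z -> (Z.abs k <= Z.of_nat N)%Z -> (Z.abs l <= Z.of_nat N)%Z ->
  Cmod (NN j k) * Cmod (NN j l) <= (c ^ 2 / (jbr k * jbr l * Q)) * cnu_kernel beta (alpha - 1) k l j.
Proof.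
  intros Hj Hk Hl.
  pose proof (NN_outside_bound j k Hj Hk) as A1. pose proof (NN_outside_bound j l Hj Hl) as A2.
  pose proof (jbr_outside j Hj) as HJ. pose proof (pos_INR N).
  pose proof (jbr_ge1 j). pose proof (jbr_ge1 k). pose proof (jbr_ge1 l).
  pose proof (Rpower_pos (jbr (j - k)) (alpha - 1)). pose proof (Rpower_pos (jbr (j - l)) (alpha - 1)).
  set (e1 := exp (- beta * IZR (Z.abs (j - k)))) in *.
  set (e2 := exp (- beta * IZR (Z.abs (j - l)))) in *.
  assert (0 < e1) by apply exp_pos. assert (0 < e2) by apply exp_pos.
  set (Pk := Rpower (jbr (j - k)) (alpha - 1)) in *. set (Pl := Rpower (jbr (j - l)) (alpha - 1)) in *.
  eapply Rle_trans. apply Rmult_le_compat; try apply Cmod_ge_0; eauto.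
  unfold cnu_kernel. rewrite (jbr_sub_sym k j). replace (Z.abs (k - j)) with (Z.abs (j - k)) by lia.
  replace (- beta * IZR (Z.abs (j - k)) - beta * IZR (Z.abs (j - l))) with
    ((- beta * IZR (Z.abs (j - k))) + (- beta * IZR (Z.abs (j - l)))) by ring.
  rewrite exp_plus. fold e1 e2 Pk Pl.
  set (X := c ^ 2 * (e1 * e2) / (jbr k * jbr l * Pk * Pl)).
  assert (0 <= X).
  { unfold X. apply Rlt_le, Rdiv_lt_0_compat.
    - assert (0 < c ^ 2) by (apply pow_lt; lra). apply Rmult_lt_0_compat; nra.
    - assert (0 < jbr k * jbr l) by nra. assert (0 < jbr k * jbr l * Pk) by nra. nra. }
  pose proof Q_pos.
  replace (c * e1 / (jbr j * jbr k * Pk) * (c * e2 / (jbr j * jbr l * Pl))) with (X * / (jbr j ^ 2))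
    by (unfold X; field; repeat split; lra).
  replace (c ^ 2 / (jbr k * jbr l * Q) * (e1 * e2 / (Pk * Pl))) with (X * / Q)
    by (unfold X; field; repeat split; lra).
  apply Rmult_le_compat_l; auto. apply Rinv_le_contravar; auto. unfold Q. nra.
Qed.

Lemma truncation_tail_bound (f : Z -> R) s k l : ZsumR f s ->
  (forall j, (Z.of_nat N < Z.abs j)%Z -> Rabs (f j) <= Cmod (NN j k) * Cmod (NN j l)) ->
  (Z.abs k <= Z.of_nat N)%Z -> (Z.abs l <= Z.of_nat N)%Z ->
  Rabs (s - rsum (2 * N + 1) (fun p => f (zenum p))) <= eps k l.
Proof.
  intros Hf Hd Hk Hl.
  destruct (hcnu beta hbeta k l) as [S [HS HSle]].
  set (K := c ^ 2 / (jbr k * jbr l * Q)).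
  pose proof (jbr_ge1 k). pose proof (jbr_ge1 l). pose proof Q_pos.
  assert (HK : 0 <= K).
  { apply Rlt_le, Rdiv_lt_0_compat. apply pow_lt; lra. assert (0 < jbr k * jbr l) by nra. nra. }
  rewrite <- sum_n_pairseq.
  eapply Rle_trans.
  apply (is_series_tail_bound (pairseq f) (fun n => K * pairseq (cnu_kernel beta (alpha - 1) k l) n)
           s (K * S) N Hf).
  - exact (is_series_scal_l K _ _ (ZsumR_is_series _ _ HS)).
  - intros n Hn. unfold pairseq. destruct (Nat.eqb_spec n 0). lia.
    eapply Rle_trans. apply Rabs_triang. rewrite Rmult_plus_distr_l.
    apply Rplus_le_compat; (eapply Rle_trans; [apply Hd; lia | apply NN_outside_prod_bound; lia]).
  - intros n. apply Rmult_le_pos; auto. apply pairseq_nonneg, cnu_kernel_nonneg.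
  - eapply Rle_trans. apply Rmult_le_compat_l; [auto|apply HSle].
    unfold K, eps, eps_jk. fold Q. right. field.
    pose proof (Rpower_pos (jbr (k - l)) (alpha - 1)). repeat split; lra.
Qed.

(* Unitarity of [NN] makes the full column Gram sum equal to [kdelta k l]; the truncated sum
   misses only the rows [|j| > N]. *)
Lemma truncated_gram_bound k l : (Z.abs k <= Z.of_nat N)%Z -> (Z.abs l <= Z.of_nat N)%Z ->
  Cmod (Cminus (csum (2 * N + 1) (fun i => Cmult (Cconj (NN (zenum i) k)) (NN (zenum i) l)))
               (RtoC (kdelta k l)))
  <= 2 * eps k l.
Proof.
  intros Hk Hl. destruct hNN as [Hcols _]. destruct (Hcols k l) as [HRe HIm].
  set (F := fun j => Cmult (Cconj (NN j k)) (NN j l)) in *.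
  change (csum (2 * N + 1) (fun i => Cmult (Cconj (NN (zenum i) k)) (NN (zenum i) l)))
    with (csum (2 * N + 1) (fun i => F (zenum i))).
  assert (HF : forall j, Cmod (F j) = Cmod (NN j k) * Cmod (NN j l)).
  { intros. unfold F. rewrite Cmod_mult, Cmod_conj. auto. }
  apply Cmod_le_Re_Im.
  - replace (Re _) with (- (Re (RtoC (kdelta k l)) - Re (csum (2 * N + 1) (fun i => F (zenum i)))))
      by (unfold Cminus, Cplus, Copp, RtoC, Re, Im; simpl; ring).
    rewrite Rabs_Ropp, Re_csum. apply (truncation_tail_bound (fun j => Re (F j))); auto.
    intros. rewrite <- HF. apply re_le_Cmod.
  - replace (Im _) with (- (Im (RtoC (kdelta k l)) - Im (csum (2 * N + 1) (fun i => F (zenum i)))))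
      by (unfold Cminus, Cplus, Copp, RtoC, Re, Im; simpl; ring).
    rewrite Rabs_Ropp, Im_csum. apply (truncation_tail_bound (fun j => Im (F j))); auto.
    intros. rewrite <- HF. eapply Rle_trans; [|apply Rmax_Cmod]. apply Rmax_r.
Qed.

Lemma eps_convolution_bound k l :
  rsum (2 * N + 1) (fun r => eps k (zenum r) * eps (zenum r) l) <= (c ^ 2 * cnu ^ 2 / Q) * eps k l.
Proof.
  destruct (hcnu beta hbeta k l) as [S [HS HSle]].
  pose proof (is_c_nu_pos _ _ hcnu) as Hcnu.
  set (K := c ^ 4 * cnu ^ 2 / (Q ^ 2 * jbr k * jbr l)).
  pose proof (jbr_ge1 k). pose proof (jbr_ge1 l). pose proof Q_pos.
  assert (HK : 0 <= K).
  { apply Rlt_le, Rdiv_lt_0_compat. apply Rmult_lt_0_compat; apply pow_lt; lra.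
    assert (0 < Q ^ 2) by (apply pow_lt; lra). assert (0 < Q ^ 2 * jbr k) by nra. nra. }
  eapply Rle_trans. apply (rsum_le _ _ (fun r => K * cnu_kernel beta (alpha - 1) k l (zenum r))).
  { intros r _. set (m := zenum r). unfold eps, eps_jk, cnu_kernel. fold Q.
    pose proof (jbr_ge1 m).
    pose proof (Rpower_pos (jbr (k - m)) (alpha - 1)). pose proof (Rpower_pos (jbr (m - l)) (alpha - 1)).
    set (e1 := exp (- beta * IZR (Z.abs (k - m)))) in *.
    set (e2 := exp (- beta * IZR (Z.abs (m - l)))) in *.
    assert (0 < e1) by apply exp_pos. assert (0 < e2) by apply exp_pos.
    replace (- beta * IZR (Z.abs (k - m)) - beta * IZR (Z.abs (m - l))) with
      ((- beta * IZR (Z.abs (k - m))) + (- beta * IZR (Z.abs (m - l)))) by ring.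
    rewrite exp_plus. fold e1 e2.
    set (Pk := Rpower (jbr (k - m)) (alpha - 1)) in *. set (Pl := Rpower (jbr (m - l)) (alpha - 1)) in *.
    set (X := K * (e1 * e2 / (Pk * Pl))).
    assert (0 <= X).
    { apply Rmult_le_pos; auto. apply Rlt_le, Rdiv_lt_0_compat; apply Rmult_lt_0_compat; lra. }
    replace (c ^ 2 * cnu * e1 / (jbr k * jbr m * Q * Pk) * (c ^ 2 * cnu * e2 / (jbr m * jbr l * Q * Pl)))
      with (X * / (jbr m ^ 2)) by (unfold X, K; field; repeat split; lra).
    rewrite <- (Rmult_1_r X) at 2. apply Rmult_le_compat_l; auto.
    rewrite <- Rinv_1. apply Rinv_le_contravar; nra. }
  rewrite rsum_scal_l, <- sum_n_pairseq.
  pose proof (is_series_partial_le _ _ N (ZsumR_is_series _ _ HS)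
                (pairseq_nonneg _ (cnu_kernel_nonneg beta (alpha - 1) k l))).
  eapply Rle_trans. apply Rmult_le_compat_l; [auto|]. eapply Rle_trans; eauto.
  unfold K, eps, eps_jk. fold Q. right. field.
  pose proof (Rpower_pos (jbr (k - l)) (alpha - 1)). repeat split; lra.
Qed.

Hypothesis HN : 400 * (c ^ 2 * cnu + c ^ 2 * cnu ^ 2) < INR N + 1.

Let n := (2 * N + 1)%nat.
Let E p q := 2 * eps (zenum p) (zenum q).

(* [trunc_col m] is column [zenum m] of the truncated matrix, rows enumerated by [zenum]. *)
Definition trunc_col (m i : nat) : C := NN (zenum i) (zenum m).

Lemma trunc_gs_inv : gs_inv n trunc_col E n.
Proof.
  pose proof (is_c_nu_pos _ _ hcnu) as Hcnu. pose proof Q_pos. pose proof (pos_INR N).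
  set (A := c ^ 2 * cnu). set (B := c ^ 2 * cnu ^ 2).
  assert (HA : 0 <= A) by (apply Rmult_le_pos; [apply pow_le|]; lra).
  assert (HB : 0 <= B) by (apply Rmult_le_pos; apply pow_le; lra).
  assert (HAs := window_sum_small N A HA ltac:(fold A B in HN; lra)).
  assert (HBs := window_sum_small N B HB ltac:(fold A B in HN; lra)).
  fold Q in HAs, HBs.
  assert (H2A : 0 <= 2 * A / Q) by (apply Rmult_le_pos; [lra|apply Rlt_le, Rinv_0_lt_compat; lra]).
  assert (H2B : 0 <= 2 * B / Q) by (apply Rmult_le_pos; [lra|apply Rlt_le, Rinv_0_lt_compat; lra]).
  apply (gs_inv_le n trunc_col E (2 * A / Q) (2 * B / Q)); try lia.
  - intros p q Hp Hq. unfold gram, inner, trunc_col, E. rewrite cdelta_kdelta.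
    pose proof (zenum_bound N p Hp). pose proof (zenum_bound N q Hq).
    apply truncated_gram_bound; lia.
  - intros. unfold E. rewrite eps_sym. auto.
  - intros. unfold E. pose proof (eps_nonneg (zenum p) (zenum q)). lra.
  - intros. unfold E. pose proof (eps_le_uniform (zenum p) (zenum q)) as He. fold A in He.
    unfold Rdiv in *. lra.
  - nra.
  - intros p q Hp Hq. unfold E.
    rewrite (rsum_ext _ _ (fun r => 4 * (eps (zenum p) (zenum r) * eps (zenum r) (zenum q))))
      by (intros; ring).
    rewrite rsum_scal_l. pose proof (eps_convolution_bound (zenum p) (zenum q)) as He. fold B in He.
    unfold n. unfold Rdiv in *. nra.
  - split; nra.
  - intros q Hq. eapply Rle_trans. apply (rsum_le _ _ (fun _ => 2 * A / Q)).
    { intros. unfold E. pose proof (eps_le_uniform (zenum i) (zenum q)) as He. fold A in He.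
      unfold Rdiv in *. lra. }
    rewrite rsum_const.
    assert (INR (S q) <= 2 * INR N + 1).
    { replace (2 * INR N + 1) with (INR n) by (unfold n; rewrite plus_INR, mult_INR; simpl; lra).
      apply le_INR. lia. }
    nra.
Qed.

Definition trunc_U (j k : Z) : C :=
  gs_vec n trunc_col (gs_coef n trunc_col) (zrank k) (zrank j).

Lemma trunc_U_unitary : unitary_fin (Z.of_nat N) trunc_U.
Proof.
  destruct trunc_gs_inv as [_ [Hortho _]].
  set (u := gs_vec n trunc_col (gs_coef n trunc_col)).
  split.
  - intros k l Hk Hl. rewrite sumC_zenum.
    rewrite (csum_ext _ _ (fun p => Cmult (Cconj (u (zrank k) p)) (u (zrank l) p)))
      by (intros; unfold trunc_U; rewrite zrank_zenum; auto).
    change (inner n (u (zrank k)) (u (zrank l)) = RtoC (kdelta k l)).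
    rewrite Hortho, cdelta_kdelta, !zenum_zrank by (apply zrank_bound; lia). auto.
  - intros j l Hj Hl. rewrite sumC_zenum.
    rewrite (csum_ext _ _ (fun q => Cmult (u q (zrank j)) (Cconj (u q (zrank l)))))
      by (intros; unfold trunc_U; rewrite zrank_zenum; auto).
    rewrite (unitary_of_isometry n u), cdelta_kdelta, !zenum_zrank; auto;
      apply zrank_bound; lia.
Qed.

Lemma trunc_U_entry_bound j k :
  (- Z.of_nat N <= j <= Z.of_nat N)%Z -> (- Z.of_nat N <= k <= Z.of_nat N)%Z ->
  Cmod (Cminus (trunc_U j k) (NN j k))
  <= sigma_k c cnu alpha beta N k * Cmod (NN j k)
     + sumR (- Z.abs k) (Z.abs k - 1)
         (fun l => if Z.eq_dec l k then 0 else 4 * eps l k * Cmod (NN j l)).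
Proof.
  intros Hj Hk.
  set (p := zrank k). set (i := zrank j). set (M := Z.abs_nat k).
  assert (Hp : (p < n)%nat) by (apply zrank_bound; lia).
  assert (HM : Z.abs k = Z.of_nat M) by (unfold M; rewrite Zabs2Nat.id_abs; auto).
  assert (HpM : (p <= 2 * M)%nat) by apply zrank_le.
  assert (Hcol : forall m, trunc_col m i = NN j (zenum m)).
  { intros. unfold trunc_col, i. rewrite zenum_zrank. auto. }
  replace (NN j k) with (trunc_col p i) by (rewrite Hcol; unfold p; rewrite zenum_zrank; auto).
  eapply Rle_trans. apply (gs_vec_sub_bound n trunc_col E p i trunc_gs_inv Hp).
  apply Rplus_le_compat.
  - apply Rmult_le_compat_r. apply Cmod_ge_0.
    unfold sigma_k. rewrite HM, sumR_zenum. fold eps.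
    replace (2 * rsum (S p) (fun r => E r p)) with (4 * rsum (S p) (fun r => eps (zenum r) k))
      by (unfold E, p; rewrite zenum_zrank, rsum_scal_l; ring).
    apply Rmult_le_compat_l; [lra|]. apply rsum_le_mono; [lia|]. intros. apply eps_nonneg.
  - rewrite HM, sumR_zenum_pred. apply (Rle_trans _ (rsum p (fun m =>
      if Z.eq_dec (zenum m) k then 0 else 4 * eps (zenum m) k * Cmod (NN j (zenum m))))).
    + apply rsum_le. intros m Hm. rewrite Hcol.
      destruct (Z.eq_dec (zenum m) k) as [Heq|].
      * exfalso. apply (f_equal zrank) in Heq. rewrite zrank_zenum in Heq. unfold p in Hm. lia.
      * unfold E, p. rewrite zenum_zrank. lra.
    + apply rsum_le_mono; auto. intros m _. destruct (Z.eq_dec (zenum m) k). lra.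
      apply Rmult_le_pos. pose proof (eps_nonneg (zenum m) k). lra. apply Cmod_ge_0.
Qed.

End TruncationEstimates.

Theorem mainTheorem11
  (h alpha beta c cnu : R) (v : Z -> R -> C) (NN : Z -> Z -> C)
  (hh : 0 < h) (halpha : 2 < alpha) (hbeta : 0 <= beta) (hc : 0 < c)
  (hcnu : is_c_nu (alpha - 1) cnu)
  (hv : potential_coeffs v)
  (hNN : unitary_Z NN)
  (hbound : forall j k : Z,
     Cmod (Cminus (NN j k) (Nmodel h v j k))
     <= c * exp (- beta * IZR (Z.abs (j - k)))
        / (jbr j * jbr k * Rpower (jbr (j - k)) (alpha - 1))) :
  exists N0 : nat, forall N : nat, (N0 <= N)%nat ->
    exists U : Z -> Z -> C,
      unitary_fin (Z.of_nat N) U /\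
      forall j k : Z,
        (- Z.of_nat N <= j <= Z.of_nat N)%Z -> (- Z.of_nat N <= k <= Z.of_nat N)%Z ->
        Cmod (Cminus (U j k) (NN j k))
        <= sigma_k c cnu alpha beta N k * Cmod (NN j k)
           + sumR (- Z.abs k) (Z.abs k - 1)
               (fun l => if Z.eq_dec l k then 0
                         else 4 * eps_jk c cnu alpha beta N l k * Cmod (NN j l)).
Proof.
  destruct (INR_S_eventually_gt (400 * (c ^ 2 * cnu + c ^ 2 * cnu ^ 2))) as [N0 HN0].
  exists N0. intros N HN. specialize (HN0 N HN).
  exists (trunc_U NN N). split.
  - apply (trunc_U_unitary h alpha beta c cnu v); auto.
  - intros j k Hj Hk. apply (trunc_U_entry_bound h alpha beta c cnu v); auto.
Qed.
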